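(* Define the affine maps of $\mathbb{C}$ \[ L_0(t) = \tfrac{9}{10} t - \tfrac{9}{100},\quad L_1(t) = \tfrac{9}{10} t - \tfrac{9i}{100},\quad L_2(t) = \tfrac{9}{10} t + \tfrac{9}{100},\quad L_3(t) = \tfrac{9}{10} t + \tfrac{9i}{100}. \] Then for every $t \in \mathbb{D}(0,1/2)$ there exist $\tau \in \mathbb{D}(0, 0.497)$ and $j \in \{0,1,2,3\}$ such that $t = L_j(\tau)$.
   Context: $\mathbb{D}(z,r)\subset\mathbb{C}$ denotes the closed disk of center $z$ and radius $r$. *)

From Stdlib Require Import Reals.
From Coquelicot Require Import Coquelicot.
Open Scope R_scope.

Definition cdisk (z : C) (r : R) (w : C) : Prop := Cmod (w - z)%C <= r.

Definition Lmap (j : nat) (t : C) : C :=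
  match j with
  | 0%nat => (RtoC (9/10) * t + RtoC (-(9/100)))%C
  | 1%nat => (RtoC (9/10) * t + (0, -(9/100))%R)%C
  | 2%nat => (RtoC (9/10) * t + RtoC (9/100))%C
  | _ => (RtoC (9/10) * t + (0, 9/100)%R)%C
  end.

(* Each [L_j] maps [D(0, r)] onto [D(L_j 0, 9r/10)], and the centres [L_j 0] are [+-9/100] and
   [+-9i/100].  So it suffices that the four disks of radius [0.9 * 0.497] around them cover
   [D(0, 1/2)]: for [t] in [D(0, 1/2)], the centre pointing along the dominant coordinate of [t]
   is close enough. *)

From Stdlib Require Import Reals Lra Psatz.
From Coquelicot Require Import Coquelicot.
Open Scope R_scope.

Lemma Cmod_le_sqr (z : C) (r : R) :
  0 <= r -> Cmod z <= r <-> fst z ^ 2 + snd z ^ 2 <= r ^ 2.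
Proof.
  intros r_ge0; unfold Cmod.
  assert (sum_ge0 : 0 <= fst z ^ 2 + snd z ^ 2) by nra.
  split; intros H.
  - rewrite <- (pow2_sqrt _ sum_ge0); apply pow_incr; auto using sqrt_pos.
  - rewrite <- (sqrt_pow2 r r_ge0); now apply sqrt_le_1_alt.
Qed.

Lemma cdisk_sqr (c : C) (r : R) (t : C) : 0 <= r ->
  cdisk c r t <-> (fst t - fst c) ^ 2 + (snd t - snd c) ^ 2 <= r ^ 2.
Proof. intros r_ge0; exact (Cmod_le_sqr (t - c) r r_ge0). Qed.

Lemma Lmap_affine (j : nat) (tau : C) : Lmap j tau = (RtoC (9/10) * tau + Lmap j 0)%C.
Proof. destruct j as [|[|[|j]]]; simpl; ring. Qed.

Lemma Lmap_onto_disk (j : nat) (r : R) (t : C) :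
  cdisk (Lmap j 0) (9/10 * r) t -> exists tau, cdisk 0 r tau /\ t = Lmap j tau.
Proof.
  intros Ht; exists (RtoC (10/9) * (t - Lmap j 0))%C; split.
  - unfold cdisk in *; replace (_ - 0)%C with (RtoC (10/9) * (t - Lmap j 0))%C by ring.
    rewrite Cmod_mult, Cmod_R, Rabs_right by lra; lra.
  - rewrite Lmap_affine, Cmult_assoc, <- RtoC_mult.
    replace (9/10 * (10/9)) with 1 by field; rewrite Cmult_1_l; ring.
Qed.

(* The worst case is the corner [u = |v| = 1/(2 sqrt 2)] of the sector, which needs a radius of
   about [0.490 < 0.497]. *)
Lemma shifted_square_bound (u v : R) : Rabs v <= u -> u ^ 2 + v ^ 2 <= (1/2) ^ 2 ->
  (u - 9/100) ^ 2 + v ^ 2 <= (9/10 * (497/1000)) ^ 2.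
Proof.
  intros v_le_u uv_le.
  assert (v2_le_u2 : v ^ 2 <= u ^ 2).
  { rewrite <- (pow2_abs v); apply pow_incr; split; [apply Rabs_pos | exact v_le_u]. }
  assert (u_ge0 : 0 <= u) by (pose proof (Rabs_pos v); lra).
  nra.
Qed.

Lemma Rabs_dominant (x y : R) :
  Rabs y <= x \/ Rabs y <= - x \/ Rabs x <= y \/ Rabs x <= - y.
Proof. unfold Rabs; destruct (Rcase_abs x), (Rcase_abs y); lra. Qed.

Lemma half_disk_covered (t : C) : cdisk 0 (1/2) t ->
  exists j, (j < 4)%nat /\ cdisk (Lmap j 0) (9/10 * (497/1000)) t.
Proof.
  destruct t as [x y]; intros Ht.
  apply cdisk_sqr in Ht; [cbn [fst snd RtoC] in Ht | lra].
  destruct (Rabs_dominant x y) as [Hx|[Hx|[Hy|Hy]]];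
    [exists 2%nat | exists 0%nat | exists 3%nat | exists 1%nat];
    (split; [lia|]); apply cdisk_sqr; try lra.
  - pose proof (shifted_square_bound x y Hx ltac:(lra)); simpl in *; lra.
  - pose proof (shifted_square_bound (- x) y Hx ltac:(lra)); simpl in *; lra.
  - pose proof (shifted_square_bound y x Hy ltac:(lra)); simpl in *; lra.
  - pose proof (shifted_square_bound (- y) x Hy ltac:(lra)); simpl in *; lra.
Qed.

Theorem mainTheorem5 :
  forall t : C, cdisk 0%C (1/2) t ->
  exists (tau : C) (j : nat),
    (j < 4)%nat /\ cdisk 0%C (497/1000) tau /\ t = Lmap j tau.
Proof.
  intros t Ht.
  destruct (half_disk_covered t Ht) as [j [j_lt_4 Ht_j]].
  destruct (Lmap_onto_disk j _ t Ht_j) as [tau [Htau ->]].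
  now exists tau, j.
Qed.
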